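(* Let $C$ be a finite set of conditional constructor set constraints. Then $C$ is unsatisfiable (has no solution) if and only if its saturation $\mathrm{Sat}(C)$ is trivially unsatisfiable, i.e. $\mathrm{Sat}(C)$ contains the constraint $\emptyset \mathbin{?} k \in \emptyset$ for some constructor $k$.
   Context: Fix a finite set $\underline{D}$ of datatype identifiers. Each $d \in \underline{D}$ has a finite set $\mathrm{Con}(d)$ of constructors. There is a countable supply of refinement variables $X, Y, Z, \dots$. An assignment $\theta$ maps each refinement variable $X$ to a function that sends each $d \in \underline{D}$ to a subset $\theta(X)(d) \subseteq \mathrm{Con}(d)$. A constructor set expression over $d$ is either a finite set $\{k_1,\dots,k_m\} \subseteq \mathrm{Con}(d)$ or a pair $X(d)$. Its meaning is $\theta[\![X(d)]\!] = \theta(X)(d)$ and $\theta[\![\{k_1,\dots,k_m\}]\!] = \{k_1,\dots,k_m\}$. An inclusion constraint $S_1 \subseteq S_2$ relates two expressions over the same $d$, and $k \in S$ abbreviates $\{k\} \subseteq S$. A (conditional) constraint $\phi \mathbin{?} S_1 \subseteq S_2$ consists of a finite set $\phi$ (the guard) of inclusions of the form $k \in X(d)$ together with an inclusion $S_1 \subseteq S_2$ (the body). $\theta$ satisfies $\phi \mathbin{?} S_1 \subseteq S_2$ if the following holds: whenever $k \in \theta(X)(d)$ for every $k \in X(d)$ in $\phi$, then $\theta[\![S_1]\!] \subseteq \theta[\![S_2]\!]$. A solution of a set $C$ is an assignment satisfying every constraint of $C$, and $C$ is satisfiable if it has a solution. A constraint is atomic if its body has one of the forms $X(d) \subseteq Y(d)$,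 $X(d) \subseteq \{k_1,\dots,k_m\}$, $k \in X(d)$, or $k \in \emptyset$. An atomic constraint is trivially unsatisfiable if it is $\emptyset \mathbin{?} k \in \emptyset$, and a set is trivially unsatisfiable if it contains such a constraint. Every constraint is converted to an equivalent finite set of atomic constraints with the same guard, as follows. A body $\{k_1,\dots,k_m\} \subseteq S$ is split into the bodies $k_i \in S$. A body $k \in \{k_1,\dots,k_m\}$ is dropped if $k$ is one of the $k_i$, and otherwise becomes $k \in \emptyset$. The saturation rules, with conclusions converted to atomic form, are: - (Transitivity) from $\phi \mathbin{?} S_1 \subseteq S_2$ and $\psi \mathbin{?} S_2 \subseteq S_3$, derive $\phi \cup \psi \mathbin{?} S_1 \subseteq S_3$; - (Satisfaction) from $\phi \mathbin{?} k \in X(d)$ and $\psi \cup \{k \in X(d)\} \mathbin{?} S_1 \subseteq S_2$, derive $\phi \cup \psi \mathbin{?} S_1 \subseteq S_2$; - (Weakening) from $\phi \mathbin{?} X(d) \subseteq Y(d)$ and $\psi \cup \{k \in Y(d)\} \mathbin{?} S_1 \subseteq S_2$, derive $\phi \cup \psi \cup \{k \in X(d)\} \mathbin{?} S_1 \subseteq S_2$. $\mathrm{Sat}(C)$ is the atomic constraint set obtained from (the atomic form of) $C$ by iteratively applying these rules until closure. *)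

From HB Require Import structures.
From mathcomp Require Import all_boot.
From mathcomp Require Import finmap.
From Stdlib Require List.

Set Implicit Arguments.
Unset Strict Implicit.
Unset Printing Implicit Defensive.

Local Open Scope fset_scope.

(* Datatype identifiers: a finite type D; constructors of d : Con d (finite).
   Refinement variables: nat.  *)

Section Constraints.
Context {D : finType} {Con : D -> finType}.

Definition assignment := nat -> forall d : D, {set Con d}.

Inductive cexpr (d : D) : Type :=
| CSet : {set Con d} -> cexpr d
| CVar : nat -> cexpr d.

Definition eval (th : assignment) (d : D) (S : cexpr d) : {set Con d} :=
  match S with CSet ks => ks | CVar X => th X d end.

(* A guard atom  k \in X(d)  is represented as (X, existT d k). *)
Definition atom : choiceType := (nat * {d : D & Con d})%type.

Definition atom_holds (th : assignment) (a : atom) : Prop :=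
  tagged a.2 \in th a.1 (tag a.2).

Definition mkatom (X : nat) (d : D) (k : Con d) : atom := (X, Tagged Con k).

Record constr : Type := Constr {
  guard : {fset atom};
  cdt : D;
  lhs : cexpr cdt;
  rhs : cexpr cdt }.

Definition satisfies (th : assignment) (c : constr) : Prop :=
  (forall a, a \in guard c -> atom_holds th a) ->
  eval th (lhs c) \subset eval th (rhs c).

Definition solution (th : assignment) (C : seq constr) : Prop :=
  forall c, List.In c C -> satisfies th c.

Definition satisfiable (C : seq constr) : Prop := exists th, solution th C.

Definition atomize_mem (phi : {fset atom}) (d : D) (k : Con d) (S : cexpr d)
  : seq constr :=
  match S with
  | CVar Y => [:: Constr phi (CSet [set k]) (CVar d Y)]
  | CSet ks => if k \in ks then [::]
               else [:: Constr phi (CSet [set k]) (CSet (set0 : {set Con d}))]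
  end.

Definition atomize (c : constr) : seq constr :=
  match c with
  | @Constr phi d S1 S2 =>
    match S1 with
    | CVar _ => [:: c]
    | CSet ks => flatten [seq atomize_mem phi k S2 | k <- enum ks]
    end
  end.

Inductive Sat (C : seq constr) : constr -> Prop :=
| Sat_base : forall c c', List.In c C -> List.In c' (atomize c) -> Sat C c'
| Sat_trans : forall (phi psi : {fset atom}) (d : D) (S1 S2 S3 : cexpr d) c',
    Sat C (Constr phi S1 S2) -> Sat C (Constr psi S2 S3) ->
    List.In c' (atomize (Constr (phi `|` psi) S1 S3)) -> Sat C c'
| Sat_satisf : forall (phi psi : {fset atom}) (d : D) (k : Con d) (X : nat)
    (d' : D) (S1 S2 : cexpr d') c',
    Sat C (Constr phi (CSet [set k]) (CVar d X)) ->
    Sat C (Constr (psi `|` [fset mkatom X k]) S1 S2) ->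
    List.In c' (atomize (Constr (phi `|` psi) S1 S2)) -> Sat C c'
| Sat_weaken : forall (phi psi : {fset atom}) (d : D) (k : Con d) (X Y : nat)
    (d' : D) (S1 S2 : cexpr d') c',
    Sat C (Constr phi (CVar d X) (CVar d Y)) ->
    Sat C (Constr (psi `|` [fset mkatom Y k]) S1 S2) ->
    List.In c' (atomize (Constr (phi `|` psi `|` [fset mkatom X k]) S1 S2)) ->
    Sat C c'.

Definition triv_unsat_constr (d : D) (k : Con d) : constr :=
  Constr fset0 (CSet [set k]) (CSet (set0 : {set Con d})).

Definition trivially_unsat (C : seq constr) : Prop :=
  exists (d : D) (k : Con d), Sat C (triv_unsat_constr k).

End Constraints.

From mathcomp Require Import all_boot finmap boolp.
From Stdlib Require List.

Set Implicit Arguments.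
Unset Strict Implicit.
Unset Printing Implicit Defensive.
Local Open Scope fset_scope.

(* Soundness: each saturation rule is valid, so a solution of C satisfies all
   of Sat(C), while no assignment satisfies [fset0 ? k \in set0].
   Completeness: put theta(X)(d) := {k | fset0 ? k \in X(d) is in Sat(C)}.
   Satisfaction steps with these facts discharge, one atom at a time, any guard
   that theta satisfies; the resulting unguarded atomic constraints hold in
   theta by Transitivity through the same facts, unless Sat(C) is trivially
   unsatisfiable. *)

Lemma InP (T : eqType) (x : T) (s : seq T) : reflect (List.In x s) (x \in s).
Proof.
elim: s => [|y s IH] /=; first by right.
by rewrite in_cons; apply: (iffP orP) => [[/eqP->|/IH]|[->|/IH]]; auto.
Qed.

Lemma In_flatten_map (A B : Type) (f : A -> seq B) (s : seq A) (y : B) :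
  List.In y (flatten [seq f x | x <- s]) <-> exists2 x, List.In x s & List.In y (f x).
Proof.
elim: s => [|x s IH] /=; first by split=> // -[].
rewrite List.in_app_iff IH; split=> [[fx_y|[z]]|[z [<-|s_z] fz_y]]; eauto.
Qed.

Section Saturation.
Context {D : finType} {Con : D -> finType}.
Local Notation constr := (@constr D Con).
Local Notation assignment := (@assignment D Con).
Implicit Types (th : assignment) (c : constr) (C : seq constr) (phi : {fset @atom D Con}).

Inductive atomic : constr -> Prop :=
| atomic_sub phi d X (S : cexpr d) : atomic (Constr phi (CVar d X) S)
| atomic_mem phi d (k : Con d) Y : atomic (Constr phi (CSet [set k]) (CVar d Y))
| atomic_absurd phi d (k : Con d) : atomic (Constr phi (CSet [set k]) (CSet set0)).

Definition with_guard phi c : constr := Constr phi (lhs c) (rhs c).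

Lemma with_guard_id c : with_guard (guard c) c = c.
Proof. by case: c. Qed.

Lemma atomic_with_guard phi c : atomic c -> atomic (with_guard phi c).
Proof. by case=> *; constructor. Qed.

Lemma atomize_atomic c c' : List.In c' (atomize c) -> atomic c'.
Proof.
case: c => phi d [ks|X] S2 /=; last by case=> // <-; constructor.
case/In_flatten_map=> k _; case: S2 => [ks'|Y] /=.
- by case: (k \in ks') => //= -[<-|//]; constructor.
- by case=> // <-; constructor.
Qed.

Lemma atomize_with_guard phi c :
  atomic c -> atomize (with_guard phi c) = [:: with_guard phi c].
Proof. by case=> //= ? d k *; rewrite enum_set1 //= in_set0. Qed.

Lemma Sat_atomic C c : Sat C c -> atomic c.
Proof. by case=> *; apply: atomize_atomic; eauto. Qed.

Lemma satisfies_atomize th c :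
  satisfies th c <-> forall c', List.In c' (atomize c) -> satisfies th c'.
Proof.
case: c => phi d [ks|X] S2; last by split=> [sat_c c' [<-|[]] //|]; apply; left.
split=> [sat_c c' /In_flatten_map [k /InP]|sat_atoms].
- rewrite mem_enum => ks_k; case: S2 sat_c => [ks'|Y] /= sat_c.
  + case ks'_k: (k \in ks') => //= -[<-|//] /sat_c /subsetP /(_ k ks_k).
    by rewrite ks'_k.
  + by case=> // <- /sat_c /subsetP /(_ k ks_k); rewrite /= sub1set.
- have atom_sat k : k \in ks ->
      forall c', List.In c' (atomize_mem phi k S2) -> satisfies th c'.
    move=> ks_k c' fk_c'; apply: sat_atoms; apply/In_flatten_map; exists k => //.
    by apply/InP; rewrite mem_enum.
  rewrite /satisfies /= => guard_th; apply/subsetP => k ks_k /=.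
  case: S2 {sat_atoms} atom_sat => [ks'|Y] /= atom_sat.
  + case ks'_k: (k \in ks') => //.
    move: (atom_sat k ks_k); rewrite ks'_k => /(_ _ (or_introl erefl) guard_th).
    by rewrite /= sub1set in_set0.
  + by move: (atom_sat k ks_k _ (or_introl erefl) guard_th); rewrite /= sub1set.
Qed.

Lemma Sat_sound C th c : solution th C -> Sat C c -> satisfies th c.
Proof.
move=> sol_th; elim=> {c} [c c' /sol_th /satisfies_atomize /[apply] //
  |phi psi d S1 S2 S3 + _ sat12 _ sat23|phi psi d k X d' S1 S2 + _ sat_k _ sat12
  |phi psi d k X Y d' S1 S2 + _ satXY _ sat12]; apply/satisfies_atomize => /= guard_th.
- apply: subset_trans (sat12 _) (sat23 _) => a a_in; apply: guard_th;
    by rewrite in_fsetU a_in ?orbT.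
- apply: sat12 => a; rewrite in_fsetU in_fset1 => /orP[psi_a|/eqP->]; last first.
    rewrite /atom_holds /= -sub1set; apply: sat_k => b phi_b.
    by apply: guard_th; rewrite in_fsetU phi_b.
  by apply: guard_th; rewrite in_fsetU psi_a orbT.
- apply: sat12 => a; rewrite in_fsetU in_fset1 => /orP[psi_a|/eqP->]; last first.
    have X_k : atom_holds th (mkatom X k).
      by apply: guard_th; rewrite in_fsetU in_fset1 eqxx orbT.
    apply: (subsetP (satXY _) _ X_k) => b phi_b.
    by apply: guard_th; rewrite !in_fsetU phi_b.
  by apply: guard_th; rewrite !in_fsetU psi_a orbT.
Qed.

Lemma trivially_unsat_unsatisfiable C : trivially_unsat C -> ~ satisfiable C.
Proof.
move=> [d [k triv_k]] [th sol_th].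
have no_guard a : a \in guard (triv_unsat_constr k) -> atom_holds th a by rewrite in_fset0.
by have := Sat_sound sol_th triv_k no_guard; rewrite /= sub1set in_set0.
Qed.

Section SatAssignment.
Variable C : seq constr.

Definition Sat_assignment : assignment := fun X d =>
  [set k : Con d | `[< Sat C (Constr fset0 (CSet [set k]) (CVar d X)) >]].

Lemma Sat_assignmentP X d (k : Con d) :
  reflect (Sat C (Constr fset0 (CSet [set k]) (CVar d X))) (k \in Sat_assignment X d).
Proof. by rewrite inE; apply: asboolP. Qed.

Lemma Sat_drop_guard phi c : Sat C (with_guard phi c) ->
  (forall a, a \in phi -> atom_holds Sat_assignment a) -> Sat C (with_guard fset0 c).
Proof.
elim/fset1U_rect: phi => // -[X [d k]] phi _ IH Sat_c guard_th.
have /Sat_assignmentP X_k : atom_holds Sat_assignment (X, Tagged Con k).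
  by apply: guard_th; rewrite in_fset1U eqxx.
apply: IH => [|a phi_a]; last by apply: guard_th; rewrite in_fset1U phi_a orbT.
apply: (@Sat_satisf _ _ C fset0 phi d k X _ (lhs c) (rhs c) _ X_k).
  by rewrite fsetUC.
rewrite fset0U -/(with_guard phi c) atomize_with_guard; first by left.
by rewrite -(with_guard_id c); apply: atomic_with_guard (Sat_atomic Sat_c).
Qed.

Hypothesis C_not_trivially_unsat : ~ trivially_unsat C.

Lemma Sat_assignment_unguarded c : atomic c -> Sat C (with_guard fset0 c) ->
  eval Sat_assignment (lhs c) \subset eval Sat_assignment (rhs c).
Proof.
case=> {c} [phi d X [ks|Y]|phi d k Y|phi d k] /= Sat_c.
- apply/subsetP => k /Sat_assignmentP X_k /=; apply/negPn/negP => ks_k.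
  apply: C_not_trivially_unsat; exists d, k; apply: Sat_trans X_k Sat_c _.
  by rewrite /= enum_set1 /= (negbTE ks_k) fsetU0; left.
- apply/subsetP => k /Sat_assignmentP X_k; apply/Sat_assignmentP.
  by apply: Sat_trans X_k Sat_c _; rewrite /= enum_set1 /= fsetU0; left.
- by rewrite sub1set; apply/Sat_assignmentP.
- by case: C_not_trivially_unsat; exists d, k.
Qed.

Lemma Sat_assignment_satisfies c : Sat C c -> satisfies Sat_assignment c.
Proof.
move=> Sat_c guard_th; apply: Sat_assignment_unguarded; first exact: Sat_atomic Sat_c.
by apply: Sat_drop_guard guard_th; rewrite with_guard_id.
Qed.

Lemma Sat_assignment_solution : solution Sat_assignment C.
Proof.
move=> c C_c; apply/satisfies_atomize => c' /(Sat_base C_c).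
exact: Sat_assignment_satisfies.
Qed.

End SatAssignment.
End Saturation.

Theorem theorem8p4 (D : finType) (Con : D -> finType) (C : seq (@constr D Con)) :
  ~ satisfiable C <-> trivially_unsat C.
Proof.
split=> [unsat|]; last exact: trivially_unsat_unsatisfiable.
apply: contrapT => not_triv; apply: unsat.
by exists (Sat_assignment C); apply: Sat_assignment_solution.
Qed.
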